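(* Let $n\ge3$ and $1\le s\le n-1$. Let $I,J\subseteq\{1,\dots,n\}$ with $|I|=s$, $|J|=s+1$, $n\in J$; put $m(J):=\max(J\setminus\{n\})$, and let $i\in CI$ and $j\in J\setminus\{m(J)\}$. Then $\theta_{m(J),j}(J)\in(1+\mathfrak a_{n,s})^*$ and $$\deg_{n,I,i}\big(\theta_{m(J),j}(J)\big)=\begin{cases}-1,& I=J\setminus\{m(J)\},\ i=m(J),\\ 1,& I=J\setminus\{j\},\ i=j,\\ 0,&\text{otherwise}.\end{cases}$$
   Context: $K$ is a field, $\mathbb N=\{0,1,\dots\}$. $\mathbb S_n$: $K$-algebra generated by $x_1,\dots,x_n,y_1,\dots,y_n$ with relations $y_ix_i=1$, $[x_i,y_j]=[x_i,x_j]=[y_i,y_j]=0$ ($i\neq j$). $E_{st}(i):=x_i^sy_i^t-x_i^{s+1}y_i^{t+1}$, $e_i:=E_{00}(i)$, $e_I:=\prod_{i\in I}e_i$, $E_{\alpha\beta}(I):=\prod_{i\in I}E_{\alpha_i\beta_i}(i)$. $\theta_{ij}(J):=(1+(y_i-1)e_{J\setminus\{i\}})(1+(x_j-1)e_{J\setminus\{j\}})$. $\mathfrak p_i$ = ideal generated by $e_i$, $\mathfrak p_I:=\prod_{i\in I}\mathfrak p_i$, $\mathfrak a_{n,s}:=\sum_{|I|=s}\mathfrak p_I$, $\mathfrak a_{n,n+1}:=0$; $(1+\mathfrak b)^*$ = units of $\mathbb S_n$ in $1+\mathfrak b$. $CI$ = complement of $I$; $\mathbb S_{CI}$ = subalgebra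 generated by $x_k,y_k$, $k\in CI$; $L_{CI}:=K[x_k^{\pm1}:k\in CI]$, with surjection $\mathbb S_{CI}\to L_{CI}$, $x_k\mapsto x_k$, $y_k\mapsto x_k^{-1}$ (kernel generated by the $e_k$, $k\in CI$). Definition of $\det_I$ and $\deg_{n,I,i}$ for $|I|=s<n$: let $\pi:K+\mathfrak a_{n,s}\to Q:=(K+\mathfrak a_{n,s})/\mathfrak a_{n,s+1}$. Then $Q=K\oplus\bigoplus_{|I'|=s}\overline{\mathfrak p}_{I'}$ with $\overline{\mathfrak p}_{I'}$ the image of $\mathfrak p_{I'}$, $\overline{\mathfrak p}_{I'}\overline{\mathfrak p}_{I''}=0$ for $I'\ne I''$, and $\overline{\mathfrak p}_{I}\simeq M_\infty(L_{CI})$ (finitary $\mathbb N^I\times\mathbb N^I$ matrices) via $\overline{aE_{\alpha\beta}(I)}\mapsto\bar a E_{\alpha\beta}$, $a\in\mathbb S_{CI}$. For $u\in(1+\mathfrak a_{n,s})^*$ write $\pi(u)=1+\sum_{|I'|=s}\bar u_{I'}$, $\bar u_{I'}\in\overline{\mathfrak p}_{I'}$; then $1+\bar u_I$ corresponds to a matrix in $\mathrm{GL}_\infty(L_{CI})$ and $\det_I(u)\in L_{CI}^*$ is its determinant; $\det_I:(1+\mathfrak a_{n,s})^*\to L_{CI}^*$ is a group homomorphism. Since $L_{CI}^*=\{\lambda\prod_{k\in CI}x_k^{\alpha_k}:\lambda\in K^*,\alpha_k\in\mathbb Z\}$, for $i\in CI$ define $\deg_{n,I,i}(u):=$ the exponent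 $\alpha_i$ of $x_i$ in $\det_I(u)$. *)

From HB Require Import structures.
From mathcomp Require Import all_boot all_order all_algebra.
From mathcomp Require Import fingroup perm.
Set Implicit Arguments.
Unset Strict Implicit.
Unset Printing Implicit Defensive.
Import Order.TTheory GRing.Theory Num.Theory.
Local Open Scope ring_scope.

(* S_n = S_1^{(x) n}, S_1 = K<x,y | yx = 1> (Jacobson algebra).  S_n  *)
(* has the K-basis of monomials x^a y^b = prod_i x_i^{a_i} y_i^{b_i}  *)
(* (a, b in N^n); i.e. S_n is the monoid algebra of the n-th power of *)
(* the bicyclic monoid, with (x^a y^b)(x^c y^d) = x^{a+(c-b)} y^{(b-c)+d} *)
(* (truncated subtraction, componentwise).  We represent an element   *)
(* of S_n by a finite formal K-linear combination of monomials (a list*)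
(* of (coefficient, monomial) pairs); two lists represent the same    *)
(* element iff they have the same coefficient at every monomial       *)
(* (relation [Seq]).  Indices 1..n of the paper are 'I_n = {0..n-1}.  *)

Section Sn.
Variables (K : fieldType) (n : nat).

Definition mono := ({ffun 'I_n -> nat} * {ffun 'I_n -> nat})%type.

Definition mono_mul (m1 m2 : mono) : mono :=
  ([ffun k => (m1.1 k + (m2.1 k - m1.2 k))%N],
   [ffun k => ((m1.2 k - m2.1 k) + m2.2 k)%N]).

Definition mono1 : mono := ([ffun _ => 0%N], [ffun _ => 0%N]).

Definition Sn := seq (K * mono)%type.

Definition Scoef (u : Sn) (m : mono) : K := \sum_(p <- u | p.2 == m) p.1.

Definition Seq (u v : Sn) : Prop := forall m, Scoef u m = Scoef v m.

Definition S0 : Sn := [::].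
Definition S1 : Sn := [:: (1, mono1)].
Definition Sadd (u v : Sn) : Sn := u ++ v.
Definition Sopp (u : Sn) : Sn := [seq (- p.1, p.2) | p <- u].
Definition Ssub (u v : Sn) : Sn := Sadd u (Sopp v).
Definition Smul (u v : Sn) : Sn :=
  [seq (p.1 * q.1, mono_mul p.2 q.2) | p <- u, q <- v].
Definition Sprod (s : seq Sn) : Sn := foldr Smul S1 s.
Definition Ssum (s : seq Sn) : Sn := foldr Sadd S0 s.

Definition Sx (i : 'I_n) : Sn :=
  [:: (1, ([ffun k => (k == i) : nat], [ffun _ => 0%N]))].
Definition Sy (i : 'I_n) : Sn :=
  [:: (1, ([ffun _ => 0%N], [ffun k => (k == i) : nat]))].

Definition Se (i : 'I_n) : Sn := Ssub S1 (Smul (Sx i) (Sy i)).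
Definition SeI (I : {set 'I_n}) : Sn := Sprod [seq Se i | i <- enum I].

Definition theta (i j : 'I_n) (J : {set 'I_n}) : Sn :=
  Smul (Sadd S1 (Smul (Ssub (Sy i) S1) (SeI (J :\ i))))
       (Sadd S1 (Smul (Ssub (Sx j) S1) (SeI (J :\ j)))).

(* Ideals.  p_i = two-sided ideal generated by e_i; p_I = prod_{i in I}*)
(* p_i (product of ideals, over I in increasing order), whose elements*)
(* are the finite sums of words a_0 e_{i_1} a_1 e_{i_2} ... e_{i_s} a_s *)
(* (I = {i_1 < ... < i_s}); a_{n,s} = sum_{|I| = s} p_I.               *)

Definition pword (I : {set 'I_n}) (a0 : Sn) (as_ : seq Sn) : Sn :=
  Smul a0 (Sprod [seq Smul (Se k.1) k.2 | k <- zip (enum I) as_]).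

Definition in_a (s : nat) (w : Sn) : Prop :=
  exists ts : seq ({set 'I_n} * Sn * seq Sn),
    (forall t, t \in ts -> #|t.1.1| = s /\ size t.2 = s) /\
    Seq w (Ssum [seq pword t.1.1 t.1.2 t.2 | t <- ts]).

Definition in_units_1a (s : nat) (u : Sn) : Prop :=
  in_a s (Ssub u S1) /\ exists v, Seq (Smul u v) S1 /\ Seq (Smul v u) S1.

(* Coefficient field for determinants.  L_{CI} = K[x_k^{+-1} : k in CI]*)
(* is realised inside the field of rational functions                 *)
(* K(X_0, ..., X_{n-1}) = Frac(K[X_0][X_1]...[X_{n-1}]).               *)
End Sn.

Fixpoint Pn (K : fieldType) (n : nat) : idomainType :=
  if n is m.+1 then ({poly Pn K m} : idomainType) else (K : idomainType).

Fixpoint Pvar (K : fieldType) (n : nat) (k : nat) : Pn K n :=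
  match n return Pn K n with
  | 0 => 0
  | m.+1 => if k == m then ('X : {poly Pn K m}) else (Pvar K m k)%:P
  end.

Fixpoint Pcst (K : fieldType) (n : nat) (c : K) : Pn K n :=
  match n return Pn K n with
  | 0 => c
  | m.+1 => (Pcst m c)%:P
  end.

Definition Ratf (K : fieldType) (n : nat) : fieldType := {fraction Pn K n}.

Definition RX (K : fieldType) (n : nat) (k : 'I_n) : Ratf K n :=
  @FracField.tofrac (Pn K n) (Pvar K n k).
Definition RC (K : fieldType) (n : nat) (c : K) : Ratf K n :=
  @FracField.tofrac (Pn K n) (Pcst n c).

Definition detT (R : comNzRingType) (T : finType) (A : T -> T -> R) : R :=
  \sum_(s : {perm T}) (-1) ^+ s * \prod_(t : T) A t (s t).

Section Det.
Variables (K : fieldType) (n : nat).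

(* det_I.  The image of u in Q, component p_I, corresponds to a matrix *)
(* 1 + \bar u_I in GL_oo(L_{CI}) (rows/columns indexed by N^I).  This  *)
(* is exactly the matrix of the action of u on the free L_{CI}-module *)
(* with basis e_g (g in N^I) in which x_k, y_k (k in CI) act as the    *)
(* scalars x_k, x_k^{-1} and, for i in I, x_i e_g = e_{g + 1_i},       *)
(* y_i e_g = e_{g - 1_i} (0 if g_i = 0): E_{ab}(I) acts as the matrix *)
(* unit E_{ab}, and all p_{I'} (I' <> I, |I'| = s) and a_{n,s+1} act  *)
(* by 0.  Entry (g, h) of the monomial x^a y^b is                      *)
(*  [forall i in I, b_i <= h_i and g_i = h_i - b_i + a_i] *             *)
(*  prod_{k in CI} x_k^{a_k - b_k}.                                    *)

Definition Mentry (I : {set 'I_n}) (u : Sn K n) (g h : 'I_n -> nat)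
  : Ratf K n :=
  \sum_(p <- u)
    (if [forall i in I, (p.2.2 i <= h i)%N && (g i == h i - p.2.2 i + p.2.1 i)%N]
     then @RC K n p.1 *
          \prod_(k in ~: I) @RX K n k ^ ((p.2.1 k)%:Z - (p.2.2 k)%:Z)
     else 0).

Definition box (I : {set 'I_n}) (N : nat) :=
  {g : {ffun 'I_n -> 'I_N.+1} | [forall k, (k \notin I) ==> (val (g k) == 0%N)]}.

Definition Mtrunc (I : {set 'I_n}) (u : Sn K n) (N : nat)
  (g h : box I N) : Ratf K n :=
  Mentry I u (fun k => val (val g k)) (fun k => val (val h k)).

(* det_I(u) = d : the determinants of the truncations of the matrix   *)
(* 1 + \bar u_I to the boxes [0, N]^I are eventually equal to d (they  *)
(* equal det(1 + \bar u_I) once the box contains its support).         *)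
Definition det_is (I : {set 'I_n}) (u : Sn K n) (d : Ratf K n) : Prop :=
  exists N0, forall N, (N0 <= N)%N -> detT (@Mtrunc I u N) = d.

Definition deg_is (I : {set 'I_n}) (i : 'I_n) (u : Sn K n) (z : int) : Prop :=
  exists (lam : K) (alpha : 'I_n -> int),
    [/\ lam != 0, alpha i = z &
        det_is I u (@RC K n lam * \prod_(k in ~: I) @RX K n k ^ alpha k)].

End Det.

(* Modulo [Seq], finite lists of
   monomials form a ring in which y_k x_k = 1, e_k = 1 - x_k y_k is idempotent
   and generators with distinct indices commute.  Writing P = J \ m and
   Q = J \ j, theta = A B with A = 1 + (y_m - 1) e_P and B = 1 + (x_j - 1) e_Q;
   A and B have one-sided inverses whose defects are both -e_J, and e_J is
   killed by A on the left and by B on the right, so theta is a unit.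
   For the degree, each factor 1 + (w - 1) e_P acts diagonally on the basis
   e_g (g in N^I): by 1 if P is not I, and otherwise by 1 except on e_0, where
   it acts as the scalar of w.  Hence every truncated matrix of theta is
   diagonal with a single entry different from 1, namely x_m^-1 when
   I = J \ m, x_j when I = J \ j, and 1 otherwise. *)

From Pilot Require Import Defs.
From HB Require Import structures.
From mathcomp Require Import all_boot all_order all_algebra.
From mathcomp Require Import fingroup perm.
From mathcomp Require Import zify generic_quotient.
Set Implicit Arguments.
Unset Strict Implicit.
Unset Printing Implicit Defensive.
Import Order.TTheory GRing.Theory Num.Theory.
Local Open Scope ring_scope.
Local Open Scope quotient_scope.

Section NoncommutativeRing.
Variable R : pzRingType.
Implicit Types a b e : R.

Lemma mul_affine_idem e a b : GRing.comm e a -> GRing.comm e b -> e * e = e ->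
  (1 + (a - 1) * e) * (1 + (b - 1) * e) = 1 + (a * b - 1) * e.
Proof.
move=> cea ceb ee.
have key : (b - 1) + (a - 1) + (a - 1) * (b - 1) = a * b - 1.
  rewrite -addrA [_ + (a - 1) * _]addrC mulrBr mulr1 subrK mulrBl mul1r.
  by rewrite addrC addrA subrK.
have eXe : (a - 1) * e * ((b - 1) * e) = (a - 1) * (b - 1) * e.
  have ceb1 : GRing.comm e (b - 1) by apply: commrB => //; apply: commr1.
  by rewrite -mulrA [e * _]mulrA ceb1 -mulrA ee mulrA.
by rewrite mulrDl mul1r mulrDr mulr1 eXe -key !mulrDl !addrA.
Qed.

Lemma mulr_inv_split (A A' B B' E : R) :
  A * A' = 1 -> B' * B = 1 -> A' * A = 1 - E -> B * B' = 1 - E ->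
  A * E = 0 -> E * B = 0 ->
  (A * B) * (B' * A') = 1 /\ (B' * A') * (A * B) = 1.
Proof.
move=> AA' B'B A'A BB' AE EB; split.
  by rewrite mulrA -[A * B * B']mulrA BB' mulrBr mulr1 AE subr0.
rewrite mulrA -[B' * A' * A]mulrA A'A mulrBr mulr1 mulrBl B'B -mulrA EB.
by rewrite mulr0 subr0.
Qed.

Lemma affine_idem_mul_annihilator e y f :
  GRing.comm e f -> e * e = e -> y * f = 0 -> (1 + (y - 1) * e) * (f * e) = 0.
Proof.
move=> cef ee yf; rewrite mulrDl mul1r -mulrA [e * _]mulrA cef -mulrA ee.
by rewrite mulrBl mulrA yf mul0r mul1r sub0r subrr.
Qed.

Lemma annihilator_mul_affine_idem e x f :
  GRing.comm e x -> e * e = e -> f * x = 0 -> (f * e) * (1 + (x - 1) * e) = 0.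
Proof.
move=> cex ee fx.
have cex1 : GRing.comm e (x - 1) by apply: commrB => //; apply: commr1.
rewrite mulrDr mulr1 -mulrA [e * (_ * e)]mulrA cex1 -mulrA ee mulrA.
by rewrite mulrBr fx mulr1 sub0r mulNr subrr.
Qed.

Lemma sum_by_fibers (T U : eqType) (s : seq T) (f : T -> U) (S : seq U)
  (G : U -> R) (H : T -> R) : uniq S -> {subset map f s <= S} ->
  \sum_(x <- s) G (f x) * H x = \sum_(y <- S) G y * \sum_(x <- s | f x == y) H x.
Proof.
move=> uS sS; under [RHS]eq_bigr => y _ do rewrite big_distrr /= big_mkcond.
rewrite exchange_big [LHS]big_seq [RHS]big_seq; apply: eq_bigr => x xs /=.
rewrite (bigD1_seq (f x)) ?sS ?map_f //= eqxx big1 ?addr0 // => y.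
by rewrite eq_sym => /negbTE ->.
Qed.

Lemma prodr_perm_comm (I : eqType) (f : I -> R) (s t : seq I) :
  (forall x y, GRing.comm (f x) (f y)) -> perm_eq s t ->
  \prod_(x <- s) f x = \prod_(x <- t) f x.
Proof.
move=> cf; elim: s t => [|a s IH] t pst.
  by move: pst; rewrite perm_sym => /perm_nilP ->.
have at_ : a \in t by rewrite -(perm_mem pst) mem_head.
case/splitPr: at_ pst => t1 t2 pst.
have st : perm_eq s (t1 ++ t2).
  rewrite -(perm_cons a); apply: (perm_trans pst).
  by rewrite (perm_catCA t1 [:: a] t2).
rewrite big_cons (IH _ st) !big_cat big_cons mulrA.
by rewrite (commr_prod t1 (fun x _ => cf a x)) -mulrA.
Qed.

Lemma prodr_idem (I : Type) (f : I -> R) (s : seq I) :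
  (forall x y, GRing.comm (f x) (f y)) -> (forall x, f x * f x = f x) ->
  (\prod_(x <- s) f x) * (\prod_(x <- s) f x) = \prod_(x <- s) f x.
Proof.
move=> cf ff; elim: s => [|i s IH]; first by rewrite big_nil mulr1.
rewrite big_cons -mulrA [_ * (f i * _)]mulrA -(commr_prod s (fun j _ => cf i j)).
by rewrite -mulrA IH mulrA ff.
Qed.

End NoncommutativeRing.

Lemma detT_diag (R : comNzRingType) (T : finType) (A : T -> T -> R) :
  (forall t t', t != t' -> A t t' = 0) -> detT A = \prod_t A t t.
Proof.
move=> A0; rewrite /detT (bigD1 1%g) //= [X in _ + X]big1 ?addr0.
  by rewrite odd_perm1 expr0 mul1r; apply: eq_bigr => t _; rewrite perm1.
move=> s s1; have [t st|sid] := pickP (fun t => s t != t).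
  by rewrite (bigD1 t) //= A0 1?eq_sym // mul0r mulr0.
by case/eqP: s1; apply/permP => t; rewrite perm1; apply/eqP/negbFE/sid.
Qed.

Section Monomials.
Variable n : nat.
Implicit Types a b c : mono n.

Lemma mono_mulA : associative (@mono_mul n).
Proof.
by move=> a b c; congr (_, _); apply/ffunP => k; rewrite !ffunE /=; lia.
Qed.

Lemma mono_mul1m : left_id (mono1 n) (@mono_mul n).
Proof.
by case=> a1 a2; congr (_, _); apply/ffunP => k; rewrite !ffunE /=; lia.
Qed.

Lemma mono_mulm1 : right_id (mono1 n) (@mono_mul n).
Proof.
by case=> a1 a2; congr (_, _); apply/ffunP => k; rewrite !ffunE /=; lia.
Qed.

Lemma mono_mulC_disjoint a b :
  (forall k, (a.1 k == 0%N) && (a.2 k == 0%N)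
             || (b.1 k == 0%N) && (b.2 k == 0%N)) ->
  mono_mul a b = mono_mul b a.
Proof.
move=> ab; congr (_, _); apply/ffunP => k; rewrite !ffunE;
  by case/orP: (ab k) => /andP [/eqP -> /eqP ->]; lia.
Qed.

End Monomials.

Section Pairing.
Variables (K : fieldType) (n : nat).
Local Notation Sn := (Sn K n).
Local Notation mono := (mono n).
Implicit Types (u v w : Sn) (F G : mono -> K).

(* An element of S_n is determined by its pairings with all functions on
   monomials; this is how [Seq] is checked to be a congruence. *)
Definition Spair u F : K := \sum_(p <- u) p.1 * F p.2.

Lemma Spair_cat u v F : Spair (u ++ v) F = Spair u F + Spair v F.
Proof. exact: big_cat. Qed.

Lemma Spair_opp u F : Spair (Sopp u) F = - Spair u F.
Proof.
by rewrite /Spair big_map -sumrN; apply: eq_bigr => p _; rewrite mulNr.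
Qed.

Lemma Spair_S0 F : Spair (S0 K n) F = 0.
Proof. exact: big_nil. Qed.

Lemma Spair_S1 F : Spair (S1 K n) F = F (mono1 n).
Proof. by rewrite /Spair big_seq1 mul1r. Qed.

Lemma Spair_mul u v F :
  Spair (Smul u v) F = Spair u (fun a => Spair v (fun b => F (mono_mul a b))).
Proof.
rewrite /Spair /Smul big_allpairs_dep; apply: eq_bigr => p _.
by rewrite big_distrr; apply: eq_bigr => q _ /=; rewrite mulrA.
Qed.

Lemma Spair_addf u F G : Spair u (fun a => F a + G a) = Spair u F + Spair u G.
Proof. by rewrite /Spair -big_split; apply: eq_bigr => p _; rewrite mulrDr. Qed.

Lemma Spair_scalf u F (c : K) : Spair u (fun a => c * F a) = c * Spair u F.
Proof. by rewrite /Spair big_distrr; apply: eq_bigr => p _; rewrite mulrCA. Qed.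

Lemma eq_Spair u F G : F =1 G -> Spair u F = Spair u G.
Proof. by move=> FG; apply: eq_bigr => p _; rewrite FG. Qed.

Lemma Scoef_Spair u m : Scoef u m = Spair u (fun a => (a == m)%:R).
Proof.
rewrite /Scoef /Spair big_mkcond; apply: eq_bigr => p _.
by case: eqP; rewrite ?mulr1 ?mulr0.
Qed.

Lemma Scoef_notin u m : m \notin map snd u -> Scoef u m = 0.
Proof.
move=> mu; rewrite /Scoef big_hasC //; apply/hasP => -[p pu /eqP pm].
by case/negP: mu; rewrite -pm; apply: map_f.
Qed.

Lemma Spair_coef u (S : seq mono) F : uniq S -> {subset map snd u <= S} ->
  Spair u F = \sum_(m <- S) Scoef u m * F m.
Proof.
move=> uS uSsub.
under eq_bigr => m _ do rewrite Scoef_Spair mulrC -Spair_scalf.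
rewrite /Spair exchange_big [LHS]big_seq [RHS]big_seq; apply: eq_bigr => p pu.
rewrite -big_distrr /= (bigD1_seq p.2) ?uSsub ?map_f //= eqxx mulr1.
by rewrite big1 ?addr0 // => m /negbTE; rewrite eq_sym => ->; rewrite mulr0.
Qed.

Lemma SeqP u v : Seq u v <-> (forall F, Spair u F = Spair v F).
Proof.
split=> [e F|e m]; last by rewrite !Scoef_Spair e.
pose S := undup (map snd (u ++ v)).
rewrite (@Spair_coef u S) ?(@Spair_coef v S) ?undup_uniq //.
- by apply: eq_bigr => m _; rewrite e.
- by move=> m mv; rewrite mem_undup map_cat mem_cat mv orbT.
- by move=> m mu; rewrite mem_undup map_cat mem_cat mu.
Qed.

Definition Seqb u v : bool :=
  all (fun m => Scoef u m == Scoef v m) (map snd (u ++ v)).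

Lemma SeqbP u v : reflect (Seq u v) (Seqb u v).
Proof.
apply: (iffP allP) => [uv m|e m _]; last by rewrite e.
have [/uv/eqP //|muv] := boolP (m \in map snd (u ++ v)).
by rewrite !Scoef_notin //; apply: contra muv;
  rewrite map_cat mem_cat => ->; rewrite ?orbT.
Qed.

Lemma Seqb_refl : reflexive Seqb. Proof. by move=> u; apply/SeqbP. Qed.

Lemma Seqb_sym : symmetric Seqb.
Proof. by move=> u v; apply/SeqbP/SeqbP => e m; rewrite e. Qed.

Lemma Seqb_trans : transitive Seqb.
Proof.
by move=> v u w /SeqbP uv /SeqbP vw; apply/SeqbP => m; rewrite uv vw.
Qed.

End Pairing.

Section QuotientRing.
Variables (K : fieldType) (n : nat).
Local Notation Sn := (Sn K n).
Implicit Types (u v w : Sn).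

Canonical Seq_equiv := EquivRel (@Seqb K n) (@Seqb_refl K n) (@Seqb_sym K n)
  (@Seqb_trans K n).

Definition Squo := {eq_quot @Seqb K n}.
HB.instance Definition _ : EqQuotient _ (@Seqb K n) Squo := EqQuotient.on Squo.
HB.instance Definition _ := Choice.on Squo.

Definition squo u : Squo := \pi_Squo u.

Lemma squo_eq u v : squo u = squo v <-> Seq u v.
Proof. by split => [/eqmodP/SeqbP|/SeqbP/eqmodP]. Qed.

Lemma squoK (x : Squo) : squo (repr x) = x.
Proof. exact: reprK. Qed.

Lemma Spair_repr u F : Spair (repr (squo u)) F = Spair u F.
Proof. by move: F; apply/SeqP/squo_eq; rewrite squoK. Qed.

Definition Squo_add (x y : Squo) := squo (Sadd (repr x) (repr y)).
Definition Squo_opp (x : Squo) := squo (Sopp (repr x)).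
Definition Squo_mul (x y : Squo) := squo (Smul (repr x) (repr y)).

Lemma Squo_add_pi u v : Squo_add (squo u) (squo v) = squo (Sadd u v).
Proof. by apply/squo_eq/SeqP => F; rewrite !Spair_cat !Spair_repr. Qed.

Lemma Squo_opp_pi u : Squo_opp (squo u) = squo (Sopp u).
Proof. by apply/squo_eq/SeqP => F; rewrite !Spair_opp Spair_repr. Qed.

Lemma Squo_mul_pi u v : Squo_mul (squo u) (squo v) = squo (Smul u v).
Proof.
apply/squo_eq/SeqP => F; rewrite !Spair_mul Spair_repr.
by apply: eq_Spair => a; rewrite Spair_repr.
Qed.

Ltac squo_elim x := rewrite -[x]squoK; move: (repr x) => {x}.

Lemma Squo_addA : associative Squo_add.
Proof.
move=> x y z; squo_elim x => x; squo_elim y => y; squo_elim z => z.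
by rewrite !Squo_add_pi; apply/squo_eq/SeqP => F; rewrite !Spair_cat addrA.
Qed.

Lemma Squo_addC : commutative Squo_add.
Proof.
move=> x y; squo_elim x => x; squo_elim y => y.
by rewrite !Squo_add_pi; apply/squo_eq/SeqP => F; rewrite !Spair_cat addrC.
Qed.

Lemma Squo_add0r : left_id (squo (S0 K n)) Squo_add.
Proof.
move=> x; squo_elim x => x; rewrite Squo_add_pi.
by apply/squo_eq/SeqP => F; rewrite Spair_cat Spair_S0 add0r.
Qed.

Lemma Squo_addNr : left_inverse (squo (S0 K n)) Squo_opp Squo_add.
Proof.
move=> x; squo_elim x => x; rewrite Squo_opp_pi Squo_add_pi.
by apply/squo_eq/SeqP => F; rewrite Spair_cat Spair_opp Spair_S0 addNr.
Qed.

Lemma Squo_mulA : associative Squo_mul.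
Proof.
move=> x y z; squo_elim x => x; squo_elim y => y; squo_elim z => z.
rewrite !Squo_mul_pi; apply/squo_eq/SeqP => F; rewrite !Spair_mul.
apply: eq_Spair => a; rewrite Spair_mul; apply: eq_Spair => b.
by apply: eq_Spair => c; rewrite mono_mulA.
Qed.

Lemma Squo_mul1r : left_id (squo (S1 K n)) Squo_mul.
Proof.
move=> x; squo_elim x => x; rewrite Squo_mul_pi; apply/squo_eq/SeqP => F.
by rewrite Spair_mul Spair_S1; apply: eq_Spair => a; rewrite mono_mul1m.
Qed.

Lemma Squo_mulr1 : right_id (squo (S1 K n)) Squo_mul.
Proof.
move=> x; squo_elim x => x; rewrite Squo_mul_pi; apply/squo_eq/SeqP => F.
by rewrite Spair_mul; apply: eq_Spair => a; rewrite Spair_S1 mono_mulm1.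
Qed.

Lemma Squo_mulDl : left_distributive Squo_mul Squo_add.
Proof.
move=> x y z; squo_elim x => x; squo_elim y => y; squo_elim z => z.
rewrite !(Squo_mul_pi, Squo_add_pi); apply/squo_eq/SeqP => F.
by rewrite !(Spair_mul, Spair_cat, Spair_repr).
Qed.

Lemma Squo_mulDr : right_distributive Squo_mul Squo_add.
Proof.
move=> x y z; squo_elim x => x; squo_elim y => y; squo_elim z => z.
rewrite !(Squo_mul_pi, Squo_add_pi); apply/squo_eq/SeqP => F.
rewrite !(Spair_mul, Spair_cat, Spair_repr) -Spair_addf.
by apply: eq_Spair => a; rewrite !(Spair_cat, Spair_repr).
Qed.

HB.instance Definition _ := GRing.isPzRing.Build Squo Squo_addA Squo_addC
  Squo_add0r Squo_addNr Squo_mulA Squo_mul1r Squo_mulr1 Squo_mulDl Squo_mulDr.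

Lemma squoD u v : squo (Sadd u v) = squo u + squo v.
Proof. by rewrite -Squo_add_pi. Qed.

Lemma squoN u : squo (Sopp u) = - squo u.
Proof. by rewrite -Squo_opp_pi. Qed.

Lemma squoB u v : squo (Ssub u v) = squo u - squo v.
Proof. by rewrite /Ssub squoD squoN. Qed.

Lemma squoM u v : squo (Smul u v) = squo u * squo v.
Proof. by rewrite -Squo_mul_pi. Qed.

Lemma squo1 : squo (S1 K n) = 1.
Proof. by []. Qed.

Lemma squo_prod (s : seq Sn) : squo (Sprod s) = \prod_(x <- s) squo x.
Proof. by elim: s => [|x s IH]; rewrite ?big_nil ?big_cons //= squoM IH. Qed.

Lemma squo_sum (s : seq Sn) : squo (Ssum s) = \sum_(x <- s) squo x.
Proof. by elim: s => [|x s IH]; rewrite ?big_nil ?big_cons //= squoD IH. Qed.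

End QuotientRing.

Section Generators.
Variables (K : fieldType) (n : nat).
Local Notation squo := (@squo K n).
Local Notation one := (S1 K n).
Implicit Types (k l : 'I_n) (P : {set 'I_n}).

Definition qx k := squo (Sx K k).
Definition qy k := squo (Sy K k).
Definition qe k := squo (Se K k).
Definition qeI P := squo (SeI K P).

Lemma squo_monoM (c d : K) (a b : mono n) :
  squo [:: (c, a)] * squo [:: (d, b)] = squo [:: (c * d, mono_mul a b)].
Proof. by rewrite -squoM. Qed.

Lemma qy_qx k : qy k * qx k = 1.
Proof.
rewrite squo_monoM mulr1 -squo1; congr (squo [:: (1, _)]).
by congr (_, _); apply/ffunP => l; rewrite !ffunE /=; lia.
Qed.

Lemma qeE k : qe k = 1 - qx k * qy k.
Proof. by rewrite /qe /Se squoB squoM. Qed.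

Lemma comm_qxy k l : k != l ->
  [/\ GRing.comm (qx k) (qx l), GRing.comm (qx k) (qy l),
      GRing.comm (qy k) (qx l) & GRing.comm (qy k) (qy l)].
Proof.
move=> kl; split; rewrite /GRing.comm !squo_monoM mono_mulC_disjoint //= => i;
  by rewrite !ffunE; case: (i =P k) => [->|]; rewrite ?(negbTE kl) //= orbT.
Qed.

Lemma comm_qe_qxy k l : k != l ->
  GRing.comm (qe k) (qx l) /\ GRing.comm (qe k) (qy l).
Proof.
move=> kl; have [xx xy yx yy] := comm_qxy kl.
by rewrite qeE; split; apply: commr_sym; apply: commrB (commr1 _) _;
  apply: commrM; apply: commr_sym.
Qed.

Lemma comm_qe k l : GRing.comm (qe k) (qe l).
Proof.
have [->|kl] := eqVneq k l; first exact: commr_refl.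
have [ex ey] := comm_qe_qxy kl.
by rewrite [qe l]qeE; apply: commrB (commr1 _) _; apply: commrM.
Qed.

Lemma qe_idem k : qe k * qe k = qe k.
Proof.
rewrite qeE mulrBl mul1r mulrBr mulr1 -mulrA [qy k * _]mulrA qy_qx mul1r.
by rewrite subrr subr0.
Qed.

Lemma qy_qe k : qy k * qe k = 0.
Proof. by rewrite qeE mulrBr mulr1 mulrA qy_qx mul1r subrr. Qed.

Lemma qe_qx k : qe k * qx k = 0.
Proof. by rewrite qeE mulrBl mul1r -mulrA qy_qx mulr1 subrr. Qed.

Lemma qeI_prod P : qeI P = \prod_(k <- enum P) qe k.
Proof. by rewrite /qeI /SeI squo_prod big_map. Qed.

Lemma qeI_idem P : qeI P * qeI P = qeI P.
Proof.
by rewrite qeI_prod; apply: prodr_idem; [apply: comm_qe | apply: qe_idem].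
Qed.

Lemma comm_qeI_qxy P l : l \notin P ->
  GRing.comm (qeI P) (qx l) /\ GRing.comm (qeI P) (qy l).
Proof.
move=> lP; rewrite qeI_prod big_seq; split; apply: commr_sym;
  apply: commr_prod => k; rewrite mem_enum => kP;
  have [] := comm_qe_qxy (_ : k != l); by [apply: contraNneq lP => <- |
    move=> *; apply: commr_sym].
Qed.

Lemma comm_qeI_qe P k : GRing.comm (qeI P) (qe k).
Proof.
by rewrite qeI_prod; apply: commr_sym; apply: commr_prod => l _; apply: comm_qe.
Qed.

Lemma qeID1 P k : k \in P -> qeI P = qe k * qeI (P :\ k).
Proof.
move=> kP; have ePk : perm_eq (enum P) (k :: enum (P :\ k)).
  apply: uniq_perm; rewrite /= ?enum_uniq ?mem_enum ?setD11 // => l.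
  by rewrite in_cons !mem_enum in_setD1; case: eqP => // ->.
by rewrite !qeI_prod (prodr_perm_comm comm_qe ePk) big_cons.
Qed.

Lemma squo_affine w P :
  squo (Sadd one (Smul (Ssub w one) (SeI K P))) = 1 + (squo w - 1) * qeI P.
Proof. by rewrite squoD squoM squoB. Qed.

Lemma squo_theta (m j : 'I_n) (J : {set 'I_n}) : squo (theta K m j J) =
  (1 + (qy m - 1) * qeI (J :\ m)) * (1 + (qx j - 1) * qeI (J :\ j)).
Proof. by rewrite squoM !squo_affine. Qed.

Lemma squo_pword P a0 : squo (pword P a0 (nseq #|P| one)) = squo a0 * qeI P.
Proof.
rewrite /pword squoM squo_prod big_map qeI_prod cardE; congr (_ * _).
by elim: (enum P) => [|k l IH]; rewrite ?big_nil //= !big_cons squoM IH mulr1.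
Qed.

Lemma theta_sub1_in_a s (m j : 'I_n) (J : {set 'I_n}) :
  m \in J -> j \in J -> #|J| = s.+1 -> in_a s (Ssub (theta K m j J) one).
Proof.
move=> mJ jJ cJ.
have cJm : #|J :\ m| = s by move: cJ; rewrite (cardsD1 m) mJ => -[].
have cJj : #|J :\ j| = s by move: cJ; rewrite (cardsD1 j) jJ => -[].
pose a := Ssub (Sy K m) one; pose b := Ssub (Sx K j) one.
pose om := nseq #|J :\ m| one; pose oj := nseq #|J :\ j| one.
exists [:: (J :\ m, a, om); (J :\ j, b, oj);
          (J :\ j, Smul (Smul a (SeI K (J :\ m))) b, oj)].
split; first by move=> t; rewrite !inE => /or3P [] /eqP -> /=; rewrite size_nseq.
apply/squo_eq; rewrite squoB squo_theta squo_sum big_map !big_cons big_nil /=.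
rewrite !squo_pword !squoM !squoB addr0 squo1 -/(qx _) -/(qy _) -/(qeI _).
set A := (qy m - 1) * _; set B := (qx j - 1) * _; rewrite -[A * _ * _]mulrA -/B.
by rewrite mulrDl mul1r mulrDr mulr1 addrAC [1 + B]addrC addrK addrCA.
Qed.

Lemma theta_invertible (m j : 'I_n) (J : {set 'I_n}) :
  m \in J -> j \in J -> m != j ->
  exists v, Seq (Smul (theta K m j J) v) one /\ Seq (Smul v (theta K m j J)) one.
Proof.
move=> mJ jJ mj; set P := J :\ m; set Q := J :\ j.
have [ePx ePy] : GRing.comm (qeI P) (qx m) /\ GRing.comm (qeI P) (qy m).
  by apply: comm_qeI_qxy; rewrite setD11.
have [eQx eQy] : GRing.comm (qeI Q) (qx j) /\ GRing.comm (qeI Q) (qy j).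
  by apply: comm_qeI_qxy; rewrite setD11.
have eJm : qeI J = qe m * qeI P by exact: qeID1.
have eJj : qeI J = qe j * qeI Q by exact: qeID1.
have qxy1 k : qx k * qy k - 1 = - qe k by rewrite qeE opprB.
exists (Smul (Sadd one (Smul (Ssub (Sy K j) one) (SeI K Q)))
             (Sadd one (Smul (Ssub (Sx K m) one) (SeI K P)))).
have [] := @mulr_inv_split _ (1 + (qy m - 1) * qeI P) (1 + (qx m - 1) * qeI P)
  (1 + (qx j - 1) * qeI Q) (1 + (qy j - 1) * qeI Q) (qeI J).
- by rewrite mul_affine_idem ?qeI_idem // qy_qx subrr mul0r addr0.
- by rewrite mul_affine_idem ?qeI_idem // qy_qx subrr mul0r addr0.
- by rewrite mul_affine_idem ?qeI_idem // qxy1 mulNr eJm.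
- by rewrite mul_affine_idem ?qeI_idem // qxy1 mulNr eJj.
- rewrite eJm affine_idem_mul_annihilator ?qeI_idem ?qy_qe //.
  exact: comm_qeI_qe.
- by rewrite eJj annihilator_mul_affine_idem ?qeI_idem ?qe_qx.
by move=> *; split; apply/squo_eq; rewrite squoM squo_theta squoM !squo_affine.
Qed.

Lemma units_theta s (m j : 'I_n) (J : {set 'I_n}) :
  m \in J -> j \in J -> m != j -> #|J| = s.+1 -> in_units_1a s (theta K m j J).
Proof.
by move=> mJ jJ mj cJ; split; [exact: theta_sub1_in_a | exact: theta_invertible].
Qed.

End Generators.

Lemma Pcst_mul (K : fieldType) (n : nat) (a b : K) :
  Pcst n (a * b) = Pcst n a * Pcst n b.
Proof. by elim: n => [|n IH] //=; rewrite IH polyCM. Qed.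

Lemma Pcst_opp (K : fieldType) (n : nat) (a : K) : Pcst n (- a) = - Pcst n a.
Proof. by elim: n => [|n IH] //=; rewrite IH polyCN. Qed.

Lemma Pcst1 (K : fieldType) (n : nat) : Pcst n (1 : K) = 1.
Proof. by elim: n => [|n IH] //=; rewrite IH. Qed.

Lemma Pvar_neq0 (K : fieldType) (n k : nat) : (k < n)%N -> Pvar K n k != 0.
Proof.
elim: n => [|n IH] //= kn; case: ifP => [_|/negbT kn'].
  by rewrite -size_poly_eq0 size_polyX.
by rewrite polyC_eq0 IH //; move: kn kn'; lia.
Qed.

Section Entries.
Variables (K : fieldType) (n : nat) (I : {set 'I_n}).
Local Notation Sn := (Sn K n).
Local Notation mono := (mono n).
Local Notation one := (S1 K n).
Local Notation RC := (@RC K n).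
Local Notation RX := (@RX K n).
Local Notation F := (Ratf K n).
Implicit Types (u v w : Sn) (a b : mono) (g h : 'I_n -> nat).

Lemma RCM (a b : K) : RC (a * b) = RC a * RC b.
Proof. by rewrite /Defs.RC Pcst_mul tofracM. Qed.

Lemma RCN (a : K) : RC (- a) = - RC a.
Proof. by rewrite /Defs.RC Pcst_opp tofracN. Qed.

Lemma RC1 : RC 1 = 1.
Proof. by rewrite /Defs.RC Pcst1. Qed.

Lemma RX_neq0 k : RX k != 0.
Proof. by rewrite /Defs.RX tofrac_eq0 Pvar_neq0. Qed.

Definition mono_entry a g h : F :=
  if [forall i in I, (a.2 i <= h i)%N && (g i == h i - a.2 i + a.1 i)%N]
  then \prod_(k in ~: I) RX k ^ ((a.1 k)%:Z - (a.2 k)%:Z) else 0.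

(* x^b.1 y^b.2 sends e_h into the line of e_(mono_act b h), whose index is
   normalised to 0 off I. *)
Definition mono_act b h : {ffun 'I_n -> nat} :=
  [ffun i => if i \in I then (h i - b.2 i + b.1 i)%N else 0%N].

Lemma Mentry_sum u g h :
  Mentry I u g h = \sum_(p <- u) RC p.1 * mono_entry p.2 g h.
Proof.
by apply: eq_bigr => p _; rewrite /mono_entry; case: ifP; rewrite ?mulr0.
Qed.

Lemma mono_entryM a b g h :
  mono_entry (mono_mul a b) g h =
  mono_entry a g (mono_act b h) * mono_entry b (mono_act b h) h.
Proof.
rewrite /mono_entry.
have [/forall_inP bh|/negbTE hb] := boolP [forall i in I, (b.2 i <= h i)%N];
  last first.
  have -> : [forall i in I, (b.2 i <= h i)%N &&
      (mono_act b h i == h i - b.2 i + b.1 i)%N] = false.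
    by apply: contraFF hb => /forall_inP H; apply/forall_inP => i /H /andP [].
  have -> : [forall i in I, ((mono_mul a b).2 i <= h i)%N &&
      (g i == h i - (mono_mul a b).2 i + (mono_mul a b).1 i)%N] = false.
    apply: contraFF hb => /forall_inP H; apply/forall_inP => i /H /andP [].
    by rewrite /mono_mul /= !ffunE; lia.
  by rewrite mulr0.
have -> : [forall i in I, (b.2 i <= h i)%N &&
    (mono_act b h i == h i - b.2 i + b.1 i)%N].
  by apply/forall_inP => i iI; rewrite ffunE iI eqxx bh.
have -> : [forall i in I, ((mono_mul a b).2 i <= h i)%N &&
      (g i == h i - (mono_mul a b).2 i + (mono_mul a b).1 i)%N] =
    [forall i in I, (a.2 i <= mono_act b h i)%N &&
      (g i == mono_act b h i - a.2 i + a.1 i)%N].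
  apply: eq_forallb_in => i iI; rewrite /mono_mul /= !ffunE iI.
  have := bh i iI => bhi.
  by apply/andP/andP => -[h1 /eqP h2]; split; try apply/eqP; lia.
case: ifP => _; last by rewrite mul0r.
rewrite -big_split; apply: eq_bigr => k _ /=; rewrite -expfzDr ?RX_neq0 //.
by congr (_ ^ _); rewrite /mono_mul /= !ffunE; lia.
Qed.

Lemma mono_entry_ext a g g' h h' : {in I, g =1 g'} -> {in I, h =1 h'} ->
  mono_entry a g h = mono_entry a g' h'.
Proof.
move=> eg eh; rewrite /mono_entry; congr (if _ then _ else _).
by apply: eq_forallb_in => i iI; rewrite eg ?eh.
Qed.

Lemma Mentry_ext u g g' h h' : {in I, g =1 g'} -> {in I, h =1 h'} ->
  Mentry I u g h = Mentry I u g' h'.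
Proof.
move=> eg eh; rewrite !Mentry_sum; apply: eq_bigr => p _.
by rewrite (mono_entry_ext _ eg eh).
Qed.

Definition vanishes_offI (x : {ffun 'I_n -> nat}) :=
  forall i, i \notin I -> x i = 0%N.

Lemma mono_act_vanishes b h : vanishes_offI (mono_act b h).
Proof. by move=> i iI; rewrite ffunE (negbTE iI). Qed.

Lemma mono_entry_neq0 b (x : {ffun 'I_n -> nat}) h :
  vanishes_offI x -> mono_entry b x h != 0 -> x = mono_act b h.
Proof.
move=> x0; rewrite /mono_entry.
case: ifP => [/forall_inP xh _|]; last by rewrite eqxx.
apply/ffunP => i; rewrite ffunE; case: ifP => iI; last by rewrite x0 ?iI.
by case/andP: (xh i iI) => _ /eqP.
Qed.

Definition Sdiag u (D : ('I_n -> nat) -> F) :=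
  forall g h, Mentry I u g h = if [forall i in I, g i == h i] then D h else 0.

(* Only the diagonality of the right factor matters: the column h of [v] is
   then concentrated on the indices agreeing with h on I. *)
Lemma Mentry_mul_diag u v Dv g h : Sdiag v Dv ->
  Mentry I (Smul u v) g h = Mentry I u g h * Dv h.
Proof.
move=> dv; pose hI := mono_act (mono1 n) h.
have hIE : {in I, hI =1 h} by move=> i iI; rewrite !ffunE iI subn0 addn0.
have -> : Mentry I (Smul u v) g h = \sum_(q <- v)
    Mentry I u g (mono_act q.2 h) * (RC q.1 * mono_entry q.2 (mono_act q.2 h) h).
  rewrite Mentry_sum /Smul big_allpairs_dep /= exchange_big /=.
  apply: eq_bigr => q _.
  rewrite Mentry_sum big_distrl; apply: eq_bigr => p _ /=.
  by rewrite RCM mono_entryM mulrACA.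
pose S := undup (hI :: map (fun q => mono_act q.2 h) v).
have S0 y : y \in S -> vanishes_offI y.
  rewrite mem_undup in_cons => /predU1P [->|/mapP [q _ ->]];
  exact: mono_act_vanishes.
rewrite (@sum_by_fibers _ _ _ v (fun q => mono_act q.2 h) S (Mentry I u g));
  [|exact: undup_uniq|by move=> y yv; rewrite mem_undup in_cons yv orbT].
have fibre y : y \in S -> \sum_(q <- v | mono_act q.2 h == y)
    RC q.1 * mono_entry q.2 (mono_act q.2 h) h = Mentry I v y h.
  move=> yS; rewrite Mentry_sum big_mkcond; apply: eq_bigr => q _ /=.
  case: eqP => [<-//|ne]; have [->|nz] := eqVneq (mono_entry q.2 y h) 0.
    by rewrite mulr0.
  by case: ne; rewrite (mono_entry_neq0 (S0 y yS) nz).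
rewrite big_seq (eq_bigr _ (fun y yS => congr1 _ (fibre y yS))) -big_seq.
rewrite (bigD1_seq hI) ?mem_undup ?mem_head ?undup_uniq //= big1_seq ?addr0.
  rewrite dv (Mentry_ext u (g' := g) (h' := h)) // ifT //.
  by apply/forall_inP => i iI; rewrite hIE.
move=> y /andP [yh yS]; rewrite dv ifF ?mulr0 //.
apply/negbTE; apply: contra yh => /forall_inP yI.
apply/eqP/ffunP => i; have [iI|iI] := boolP (i \in I).
  by rewrite hIE // (eqP (yI i iI)).
by rewrite (S0 y yS) // ffunE (negbTE iI).
Qed.

Lemma eq_Sdiag u D D' : Sdiag u D -> D =1 D' -> Sdiag u D'.
Proof. by move=> du DD' g h; rewrite du DD'. Qed.

Lemma Sdiag_add u v Du Dv : Sdiag u Du -> Sdiag v Dv ->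
  Sdiag (Sadd u v) (fun h => Du h + Dv h).
Proof.
move=> du dv g h; rewrite Mentry_sum big_cat -!Mentry_sum du dv.
by rewrite /=; case: ifP; rewrite ?addr0.
Qed.

Lemma Sdiag_opp u Du : Sdiag u Du -> Sdiag (Sopp u) (fun h => - Du h).
Proof.
move=> du g h; rewrite Mentry_sum big_map.
under eq_bigr => p _ do rewrite RCN mulNr.
by rewrite sumrN -Mentry_sum du; case: ifP; rewrite ?oppr0.
Qed.

Lemma Sdiag_mul u v Du Dv : Sdiag u Du -> Sdiag v Dv ->
  Sdiag (Smul u v) (fun h => Du h * Dv h).
Proof.
move=> du dv g h; rewrite (Mentry_mul_diag _ _ _ dv) du.
by case: ifP; rewrite ?mul0r.
Qed.

Lemma Sdiag_mono (c : K) a : {in I, a.1 =1 a.2} ->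
  Sdiag [:: (c, a)] (fun h => if [forall i in I, (a.2 i <= h i)%N]
     then RC c * \prod_(k in ~: I) RX k ^ ((a.1 k)%:Z - (a.2 k)%:Z) else 0).
Proof.
move=> ea g h; rewrite Mentry_sum big_seq1 /= /mono_entry.
have [/forall_inP gh|/forall_inPn [i iI ngh]] := boolP [forall i in I, g i == h i].
  have -> : [forall i in I, (a.2 i <= h i)%N && (g i == h i - a.2 i + a.1 i)%N] =
      [forall i in I, (a.2 i <= h i)%N].
    apply: eq_forallb_in => i iI; rewrite (eqP (gh i iI)) (ea i iI).
    by case: leqP => // hle; apply/eqP; lia.
  by case: ifP; rewrite ?mulr0.
rewrite ifF ?mulr0 //; apply/negbTE/forall_inPn; exists i => //; rewrite (ea i iI).
by apply/negP => /andP [hle /eqP e]; move: ngh; rewrite e; move/eqP; lia.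
Qed.

Lemma Sdiag1 : Sdiag one (fun _ => 1).
Proof.
apply: eq_Sdiag; first by apply: Sdiag_mono => i _; rewrite !ffunE.
move=> h /=; rewrite ifT; last by apply/forall_inP => i _; rewrite ffunE.
by rewrite RC1 mul1r big1 // => k _; rewrite !ffunE subrr expr0z.
Qed.

Lemma prod_RX_delta k (z : int) : k \notin I ->
  \prod_(l in ~: I) RX l ^ ((l == k)%:Z * z) = RX k ^ z.
Proof.
move=> kI; rewrite (bigD1 k) ?inE //= eqxx mul1r big1 ?mulr1 //.
by move=> l /andP [_ /negbTE ->]; rewrite mul0r expr0z.
Qed.

Lemma Sdiag_x k : k \notin I -> Sdiag (Sx K k) (fun _ => RX k ^ 1).
Proof.
move=> kI; have kI' i : i \in I -> i != k by apply: contraTneq => ->.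
apply: eq_Sdiag.
  by apply: Sdiag_mono => i /kI' ik; rewrite !ffunE (negbTE ik).
move=> h /=; rewrite ifT; last by apply/forall_inP => i _; rewrite ffunE.
rewrite RC1 mul1r -(prod_RX_delta 1 kI); apply: eq_bigr => l _.
by rewrite !ffunE subr0 mulr1.
Qed.

Lemma Sdiag_y k : k \notin I -> Sdiag (Sy K k) (fun _ => RX k ^ -1).
Proof.
move=> kI; have kI' i : i \in I -> i != k by apply: contraTneq => ->.
apply: eq_Sdiag.
  by apply: Sdiag_mono => i /kI' ik; rewrite !ffunE (negbTE ik).
move=> h /=; rewrite ifT; last first.
  by apply/forall_inP => i /kI' ik; rewrite ffunE (negbTE ik).
rewrite RC1 mul1r -(prod_RX_delta (-1) kI); apply: eq_bigr => l _.
by rewrite !ffunE sub0r mulrN1.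
Qed.

Lemma Sdiag_e k :
  Sdiag (Se K k) (fun h => if k \in I then (h k == 0%N)%:R else 0).
Proof.
have xy : Smul (Sx K k) (Sy K k) =
  [:: (1 * 1, mono_mul ([ffun l => (l == k) : nat], [ffun=> 0%N])
                       ([ffun=> 0%N], [ffun l => (l == k) : nat]))] by [].
apply: eq_Sdiag.
  apply: Sdiag_add Sdiag1 (Sdiag_opp _); rewrite xy.
  by apply: Sdiag_mono => i _; rewrite /mono_mul /= !ffunE; lia.
move=> h /=; rewrite mulr1 RC1 mul1r big1; last first.
  by move=> l _; rewrite /mono_mul /= !ffunE subn0 addn0 add0n subrr expr0z.
have [kI|kI] := boolP (k \in I).
  have [hk|hk] := eqVneq (h k) 0%N.
    rewrite ifF ?subr0 //; apply/negbTE/forall_inPn; exists k => //.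
    by rewrite !ffunE eqxx hk.
  rewrite ifT ?subrr //; apply/forall_inP => i _; rewrite !ffunE.
  by case: eqP => [->|]; rewrite // lt0n.
rewrite ifT ?subrr //; apply/forall_inP => i iI; rewrite !ffunE.
by case: eqP => [ik|] //; move: kI; rewrite -ik iI.
Qed.

Lemma Sdiag_mul0 u v : Sdiag v (fun _ => 0) -> Sdiag (Smul u v) (fun _ => 0).
Proof. by move=> dv g h; rewrite (Mentry_mul_diag _ _ _ dv) mulr0; case: ifP. Qed.

Lemma Sdiag_SeI (P : {set 'I_n}) : Sdiag (SeI K P)
  (fun h => \prod_(k in P) (if k \in I then (h k == 0%N)%:R else 0)).
Proof.
suff: Sdiag (SeI K P)
    (fun h => \prod_(k <- enum P) (if k \in I then (h k == 0%N)%:R else 0)).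
  by move/eq_Sdiag; apply => h; rewrite big_enum.
rewrite /SeI; elim: (enum P) => [|k l IH] /=.
  by apply: eq_Sdiag Sdiag1 _ => h; rewrite big_nil.
by apply: eq_Sdiag (Sdiag_mul (Sdiag_e k) IH) _ => h; rewrite big_cons.
Qed.

Definition origin_ind h : F := \prod_(k in I) (h k == 0%N)%:R.

Lemma Sdiag_affine w Dw : Sdiag w Dw ->
  Sdiag (Sadd one (Smul (Ssub w one) (SeI K I)))
    (fun h => 1 + (Dw h - 1) * origin_ind h).
Proof.
move=> dw; apply: eq_Sdiag.
  apply: Sdiag_add Sdiag1 (Sdiag_mul _ (Sdiag_SeI I)).
  exact: Sdiag_add dw (Sdiag_opp Sdiag1).
by move=> h /=; congr (_ + _ * _); apply: eq_bigr => k ->.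
Qed.

Lemma Sdiag_affine_off w (P : {set 'I_n}) : ~~ (P \subset I) ->
  Sdiag (Sadd one (Smul (Ssub w one) (SeI K P))) (fun _ => 1).
Proof.
case/subsetPn => k kP kI; apply: eq_Sdiag (Sdiag_add Sdiag1 (Sdiag_mul0 _ _)) _.
  apply: eq_Sdiag (Sdiag_SeI P) _ => h.
  by rewrite (bigD1 k) //= (negbTE kI) mul0r.
by move=> h; rewrite addr0.
Qed.

Lemma Sdiag_theta_left m j J : I = J :\ m -> ~~ (J :\ j \subset I) ->
  Sdiag (theta K m j J) (fun h => 1 + (RX m ^ (-1) - 1) * origin_ind h).
Proof.
move=> IP Qoff; have mI : m \notin I by rewrite IP setD11.
rewrite /theta -IP.
apply: eq_Sdiag (Sdiag_mul (Sdiag_affine (Sdiag_y mI)) (Sdiag_affine_off _ Qoff)) _.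
by move=> h; rewrite mulr1.
Qed.

Lemma Sdiag_theta_right m j J : I = J :\ j -> ~~ (J :\ m \subset I) ->
  Sdiag (theta K m j J) (fun h => 1 + (RX j ^ 1 - 1) * origin_ind h).
Proof.
move=> IQ Poff; have jI : j \notin I by rewrite IQ setD11.
rewrite /theta -IQ.
apply: eq_Sdiag (Sdiag_mul (Sdiag_affine_off _ Poff) (Sdiag_affine (Sdiag_x jI))) _.
by move=> h; rewrite mul1r.
Qed.

Lemma Sdiag_theta_off m j J : ~~ (J :\ m \subset I) -> ~~ (J :\ j \subset I) ->
  Sdiag (theta K m j J) (fun _ => 1).
Proof.
move=> Poff Qoff; apply: eq_Sdiag (Sdiag_mul (Sdiag_affine_off _ Poff)
  (Sdiag_affine_off _ Qoff)) _.
by move=> h; rewrite mulr1.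
Qed.

Definition box_idx N (h : box I N) : 'I_n -> nat := fun k => val (val h k).

Lemma box_idx_offI N (h : box I N) k : k \notin I -> box_idx h k = 0%N.
Proof. by move=> kI; have /forallP/(_ k) := valP h; rewrite kI => /eqP. Qed.

Lemma det_Sdiag u D N : Sdiag u D ->
  detT (@Mtrunc K n I u N) = \prod_(h : box I N) D (box_idx h).
Proof.
move=> du; rewrite detT_diag => [|g h gh].
  by apply: eq_bigr => h _; rewrite /Mtrunc du ifT //; apply/forall_inP.
rewrite /Mtrunc du ifF //; apply: contraNF gh => /forall_inP gh.
apply/eqP/val_inj/ffunP => k; apply: val_inj.
have [kI|kI] := boolP (k \in I); first exact: eqP (gh k kI).
by rewrite -/(box_idx g k) -/(box_idx h k) !box_idx_offI.
Qed.

Lemma box0_subproof N :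
  [forall k, (k \notin I) ==>
             (val (([ffun=> ord0] : {ffun 'I_n -> 'I_N.+1}) k) == 0%N)].
Proof. by apply/forallP => k; rewrite ffunE implybT. Qed.

Definition box0 N : box I N :=
  exist (fun g : {ffun 'I_n -> 'I_N.+1} =>
           [forall k, (k \notin I) ==> (val (g k) == 0%N)])
        _ (box0_subproof N).

Lemma box_idx0 N k : box_idx (box0 N) k = 0%N.
Proof. by rewrite /box_idx /= ffunE. Qed.

Lemma prod_box_affine N (c : F) :
  \prod_(h : box I N) (1 + (c - 1) * origin_ind (box_idx h)) = c.
Proof.
rewrite (bigD1 (box0 N)) //= big1 => [|h h0].
  rewrite mulr1 /origin_ind big1 => [|k _]; last by rewrite box_idx0.
  by rewrite mulr1 addrC subrK.
have [k hk] : exists k, box_idx h k != 0%N.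
  apply/existsP; apply: contraNT h0 => /existsPn h0; apply/eqP/val_inj/ffunP => k.
  by apply/val_inj; rewrite ffunE; apply/eqP/negbNE/h0.
have kI : k \in I by apply: contraTT hk => kI; rewrite box_idx_offI.
by rewrite /origin_ind (bigD1 k) //= (negbTE hk) mul0r mulr0 addr0.
Qed.

Lemma det_is_Sdiag u c :
  Sdiag u (fun h => 1 + (c - 1) * origin_ind h) -> det_is I u c.
Proof.
by move=> du; exists 0%N => N _; rewrite (det_Sdiag N du) prod_box_affine.
Qed.

Lemma deg_is_Sdiag u i k (z : int) : k \notin I ->
  Sdiag u (fun h => 1 + (RX k ^ z - 1) * origin_ind h) ->
  deg_is I i u ((i == k)%:Z * z).
Proof.
move=> kI du; exists 1, (fun l => (l == k)%:Z * z).
split => //; first exact: oner_neq0.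
by rewrite RC1 mul1r prod_RX_delta //; apply: det_is_Sdiag.
Qed.

Lemma deg_is_Sdiag1 u i : Sdiag u (fun _ => 1) -> deg_is I i u 0.
Proof.
move=> du; exists 1, (fun _ => 0); split => //; first exact: oner_neq0.
rewrite RC1 mul1r big1 => [|k _]; last exact: expr0z.
by apply: det_is_Sdiag; apply: eq_Sdiag du _ => h; rewrite subrr mul0r addr0.
Qed.

End Entries.

Unset Implicit Arguments.

Theorem lemma5p9 (K : fieldType) (n s : nat) (I J : {set 'I_n})
  (mJ i j : 'I_n) :
  (3 <= n)%N -> (1 <= s)%N -> (s <= n.-1)%N ->
  #|I| = s -> #|J| = s.+1 ->
  (exists2 t : 'I_n, t \in J & val t = n.-1) ->
  mJ \in J -> val mJ != n.-1 ->
  (forall k : 'I_n, k \in J -> val k != n.-1 -> (k <= mJ)%N) ->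
  i \notin I -> j \in J :\ mJ ->
  in_units_1a s (theta K mJ j J) /\
  deg_is I i (theta K mJ j J)
    (if (I == J :\ mJ) && (i == mJ) then -1
     else if (I == J :\ j) && (i == j) then 1 else 0).
Proof.
move=> _ _ _ cI cJ _ mJJ _ _ _ /setD1P [jm jJ].
split; first by apply: units_theta; rewrite // eq_sym.
have off k : k \in J -> J :\ k != I -> ~~ (J :\ k \subset I).
  move=> kJ; apply: contra => JkI; rewrite eqEcard JkI cI /=.
  by move: cJ; rewrite (cardsD1 k) kJ => -[]; rewrite add0n => ->.
have [IP|IP] := eqVneq I (J :\ mJ).
  have mI : mJ \notin I by rewrite IP setD11.
  have IQ : I != J :\ j by apply: contraNneq mI => ->; rewrite !inE eq_sym jm.
  rewrite (negbTE IQ) andTb andFb.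
  have -> : (if i == mJ then -1 else 0) = (i == mJ)%:Z * -1 by case: (i == mJ).
  apply: (deg_is_Sdiag _ mI); apply: Sdiag_theta_left => //.
  by rewrite off // eq_sym.
have [IQ|IQ] := eqVneq I (J :\ j).
  have jI : j \notin I by rewrite IQ setD11.
  rewrite andFb andTb.
  have -> : (if i == j then 1 else 0) = (i == j)%:Z * 1 by case: (i == j).
  apply: (deg_is_Sdiag _ jI); apply: Sdiag_theta_right => //.
  by rewrite off // eq_sym.
rewrite !andFb; apply: deg_is_Sdiag1.
by apply: Sdiag_theta_off; rewrite off // eq_sym.
Qed.
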